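(* Let $G=(V,E,H)$ be a HEDG, $\mathbb{P}_V$ a probability distribution on $\mathcal{X}_V=\prod_{v\in V}\mathcal{X}_v$ (standard Borel spaces), $W\subseteq V$, $G_W=G^{\mathrm{marg}(W)}$ and $\mathbb{P}_W$ the marginal of $\mathbb{P}_V$ on $\mathcal{X}_W$. If $(G,\mathbb{P}_V)$ satisfies the directed global Markov property, then so does $(G_W,\mathbb{P}_W)$; and if $(G,\mathbb{P}_V)$ satisfies the general directed global Markov property, then so does $(G_W,\mathbb{P}_W)$.
   Context: HEDG $G=(V,E,H)$: $V$ finite, $E\subseteq V\times V$ (self-loops allowed), $H$ a simplicial complex on $V$ (contains singletons, closed under subsets); $v\leftrightarrow w$ for distinct $v,w$ with $\{v,w\}\in H$. $\mathrm{Anc}(v),\mathrm{Desc}(v)$ include $v$; $\mathrm{Sc}(v)=\mathrm{Anc}(v)\cap\mathrm{Desc}(v)$. Marginalization onto $W$, $G^{\mathrm{marg}(W)}$ (marginalizing out $U=V\setminus W$): node set $W$; $v_1\to v_2$ iff $G$ has a directed path $v_1\to u_1\to\cdots\to u_r\to v_2$ ($r\ge0$, $u_i\in U$); $F'\subseteq W$ is a hyperedge iff there is $F\in H$, $F\subseteq F'\cup U$, with each $v\in F'$ in $F\setminus U$ or reached by a directed path $u_1\to\cdots\to u_r\to v$ ($r\ge1$, $u_i\in U$, $u_1\in F$). Paths: node sequences (repetitions allowed) with consecutive nodes joined by $\to,\leftarrow,\leftrightarrow$; an intermediate node is a collider if both adjacent edges have an arrowhead at it. d-separation $X\perp^dY\mid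 Z$: every path between $X$ and $Y$ has an endnode in $Z$, or a collider not in $\mathrm{Anc}(Z)$, or a non-collider in $Z$. $\sigma$-separation $X\perp^\sigma Y\mid Z$: every path between $X$ and $Y$ has an endnode in $Z$, or a collider not in $\mathrm{Anc}(Z)$, or a non-collider $v_i\in Z$ with an adjacent path edge $v_i\to v_{i\pm1}$ pointing to a node outside $\mathrm{Sc}(v_i)$ (all notions in the respective HEDG). Directed global Markov property of $(G,\mathbb{P}_V)$: $X\perp^d_GY\mid Z$ implies conditional independence under $\mathbb{P}_V$ of the coordinates in $X$ and $Y$ given those in $Z$, for all $X,Y,Z\subseteq V$. General directed global Markov property: the same with $\perp^\sigma_G$ in place of $\perp^d_G$. *)

From HB Require Import structures.
From mathcomp Require Import all_boot all_order all_algebra.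
From mathcomp Require Import all_classical all_reals all_analysis.

Set Implicit Arguments.
Unset Strict Implicit.
Unset Printing Implicit Defensive.

Import Order.TTheory GRing.Theory Num.Theory.
Local Open Scope ring_scope.

(* A HEDG G = (V, E, H): V a finite type, E : rel V the directed edges
   (self-loops allowed), H a simplicial complex on V. *)
Definition is_hedg (V : finType) (H : {set {set V}}) : Prop :=
  (forall v : V, [set v] \in H) /\
  (forall F F' : {set V}, F' \subset F -> F \in H -> F' \in H).

Definition Anc (V : finType) (E : rel V) (v : V) : {set V} :=
  [set w | connect E w v].
Definition Desc (V : finType) (E : rel V) (v : V) : {set V} :=
  [set w | connect E v w].
Definition Sc (V : finType) (E : rel V) (v : V) : {set V} :=
  Anc E v :&: Desc E v.
Definition AncS (V : finType) (E : rel V) (Z : {set V}) : {set V} :=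
  \bigcup_(z in Z) Anc E z.

(* Kinds of edges along a path, oriented from the previous node a to the
   next node b:  Fwd : a -> b,  Bwd : a <- b,  Bi : a <-> b. *)
Inductive ekind := Fwd | Bwd | Bi.

Definition edge_ok (V : finType) (E : rel V) (H : {set {set V}})
    (k : ekind) (a b : V) : bool :=
  match k with
  | Fwd => E a b
  | Bwd => E b a
  | Bi => (a != b) && ([set a; b] \in H)
  end.

(* A path is a start node x0 together with a sequence of steps (k_i, v_i):
   the i-th step is an edge of kind k_i between v_{i-1} and v_i (v_0 = x0).
   Paths of length 0 (a single node) are allowed; nodes may repeat. *)
Definition pnode (V : finType) (x0 : V) (st : seq (ekind * V)) (i : nat) : V :=
  nth x0 (x0 :: map snd st) i.
Definition pkind (V : finType) (st : seq (ekind * V)) (i : nat) : ekind :=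
  nth Fwd (map fst st) i.

Definition is_path (V : finType) (E : rel V) (H : {set {set V}})
    (x0 : V) (st : seq (ekind * V)) : Prop :=
  forall i, (i < size st)%N ->
    edge_ok E H (pkind st i) (pnode x0 st i) (pnode x0 st i.+1).

Definition head_at_next (k : ekind) : bool :=
  match k with Fwd | Bi => true | Bwd => false end.
Definition head_at_prev (k : ekind) : bool :=
  match k with Bwd | Bi => true | Fwd => false end.

Definition is_fwd (k : ekind) : bool := if k is Fwd then true else false.
Definition is_bwd (k : ekind) : bool := if k is Bwd then true else false.

Definition collider (V : finType) (st : seq (ekind * V)) (i : nat) : bool :=
  head_at_next (pkind st i.-1) && head_at_prev (pkind st i).

Definition intermediate (V : finType) (st : seq (ekind * V)) (i : nat) : bool :=
  (0 < i)%N && (i < size st)%N.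

Definition path_between (V : finType) (E : rel V) (H : {set {set V}})
    (X Y : {set V}) (x0 : V) (st : seq (ekind * V)) : Prop :=
  is_path E H x0 st /\ x0 \in X /\ pnode x0 st (size st) \in Y.

Definition d_blocked (V : finType) (E : rel V) (Z : {set V})
    (x0 : V) (st : seq (ekind * V)) : Prop :=
  x0 \in Z \/ pnode x0 st (size st) \in Z \/
  (exists i, intermediate st i /\ collider st i /\
             pnode x0 st i \notin AncS E Z) \/
  (exists i, intermediate st i /\ ~~ collider st i /\ pnode x0 st i \in Z).

Definition sigma_blocked (V : finType) (E : rel V) (Z : {set V})
    (x0 : V) (st : seq (ekind * V)) : Prop :=
  x0 \in Z \/ pnode x0 st (size st) \in Z \/
  (exists i, intermediate st i /\ collider st i /\
             pnode x0 st i \notin AncS E Z) \/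
  (exists i, intermediate st i /\ ~~ collider st i /\ pnode x0 st i \in Z /\
     (
      is_bwd (pkind st i.-1) && (pnode x0 st i.-1 \notin Sc E (pnode x0 st i))
      \/
      is_fwd (pkind st i) && (pnode x0 st i.+1 \notin Sc E (pnode x0 st i)))).

Definition dsep (V : finType) (E : rel V) (H : {set {set V}})
    (X Y Z : {set V}) : Prop :=
  forall x0 st, path_between E H X Y x0 st -> d_blocked E Z x0 st.

Definition sigmasep (V : finType) (E : rel V) (H : {set {set V}})
    (X Y Z : {set V}) : Prop :=
  forall x0 st, path_between E H X Y x0 st -> sigma_blocked E Z x0 st.

Definition subW (V : finType) (W : {set V}) : finType := {v : V | v \in W}.

Definition margE (V : finType) (E : rel V) (W : {set V}) : rel (subW W) :=
  fun v1 v2 => `[< exists us : seq V,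
      path E (val v1) (rcons us (val v2)) /\ all (fun u => u \notin W) us >].

Definition margH (V : finType) (E : rel V) (H : {set {set V}}) (W : {set V})
    : {set {set subW W}} :=
  [set F' : {set subW W} | `[< exists F : {set V}, F \in H /\
      F \subset (val @: F') :|: ~: W /\
      forall v : subW W, v \in F' ->
        (val v \in F (* = F \ U, as v \in W *)) \/
        (exists (u1 : V) (us : seq V), u1 \in F /\ u1 \notin W /\
           all (fun u => u \notin W) us /\
           path E u1 (rcons us (val v))) >] ].

Local Open Scope classical_set_scope.

Section ProductSpace.
Context (V : Type) (dX : V -> measure_display)
        (X : forall v : V, measurableType (dX v)).

Definition dprod : Type := forall v : V, X v.

HB.instance Definition _ := Choice.on dprod.
HB.instance Definition _ := isPointed.Build dprod (fun v => point).

Definition cylinders (A : set V) : set (set dprod) :=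
  [set C | exists (v : V) (B : set (X v)),
     A v /\ measurable B /\ C = (fun x : dprod => x v) @^-1` B].

Definition sigma_coord (A : set V) : set (set dprod) :=
  <<s cylinders A >>.

Lemma dprod_measurable0 : sigma_coord setT set0.
Proof. exact: sigma_algebra0. Qed.

Lemma dprod_measurableC (A : set dprod) :
  sigma_coord setT A -> sigma_coord setT (~` A).
Proof. by move=> sA; rewrite -setTD; exact: sigma_algebraCD. Qed.

Lemma dprod_measurable_bigcup (F : (set dprod)^nat) :
  (forall i, sigma_coord setT (F i)) -> sigma_coord setT (\bigcup_i F i).
Proof. exact: sigma_algebra_bigcup. Qed.

Definition dprod_display : measure_display.
Proof. exact: default_measure_display. Qed.

HB.instance Definition _ := @isMeasurable.Build dprod_display dprod
  (sigma_coord setT) dprod_measurable0 dprod_measurableC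
  dprod_measurable_bigcup.

End ProductSpace.

(* Standard Borel space: Borel-isomorphic to a Borel subset of the reals
   (a bimeasurable bijection onto a Borel set B of R). *)
Definition standard_borel (R : realType) (d : measure_display)
    (T : measurableType d) : Prop :=
  exists (B : set R) (f : T -> R),
    measurable B /\ f @` setT = B /\ injective f /\
    measurable_fun setT f /\
    (forall A : set T, measurable A -> measurable (f @` A)).

Section CondIndep.
Context (R : realType) (V : finType) (dX : V -> measure_display)
        (X : forall v : V, measurableType (dX v)).

(* Conditional independence X_A _||_ X_B | X_C under P:
   for every event F in sigma(X_A) the conditional probability
   P(F | X_B, X_C) admits a sigma(X_C)-measurable version k, i.e.
   P(F \cap D) = \int_D k dP for every D in sigma(X_{B \cup C}). *)
Definition cond_indep (P : probability (dprod X) R) (A B C : {set V}) : Prop :=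
  forall F : set (dprod X), @sigma_coord V dX X [set v | v \in A] F ->
    exists k : dprod X -> R,
      (forall x, 0 <= k x <= 1) /\
      (forall O : set R, measurable O -> @sigma_coord V dX X [set v | v \in C] (k @^-1` O)) /\
      (forall D : set (dprod X), @sigma_coord V dX X [set v | v \in B :|: C] D ->
         P (F `&` D) = (\int[P]_(x in D) (k x)%:E)%E).

Definition directed_global_markov (E : rel V) (H : {set {set V}})
    (P : probability (dprod X) R) : Prop :=
  forall A B C : {set V}, dsep E H A B C -> cond_indep P A B C.

Definition general_directed_global_markov (E : rel V) (H : {set {set V}})
    (P : probability (dprod X) R) : Prop :=
  forall A B C : {set V}, sigmasep E H A B C -> cond_indep P A B C.

End CondIndep.

Definition restrX (V : finType) (dX : V -> measure_display)
    (X : forall v : V, measurableType (dX v)) (W : {set V}) :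
    forall w : subW W, measurableType (dX (val w)) :=
  fun w => X (val w).

Definition proj_to (V : finType) (dX : V -> measure_display)
    (X : forall v : V, measurableType (dX v)) (W : {set V}) :
    dprod X -> dprod (@restrX V dX X W) :=
  fun x w => x (val w).

Arguments subW {V} W.
Arguments margE {V} E W.
Arguments margH {V} E H W.
Arguments restrX {V dX} X W.
Arguments proj_to {V dX} X W.

From HB Require Import structures.
From mathcomp Require Import all_boot all_order all_algebra.
From mathcomp Require Import all_classical all_reals all_analysis.
From mathcomp Require Import measurable_realfun.

(* An open walk of G between nodes of W, given Z contained in W, is contracted to an open
   walk of the marginal HEDG by cutting it at its nodes in W. A stretch of latent nodes
   between two consecutive W-nodes becomes a directed edge, or a bidirected edge when a
   latent node of the stretch (or a hyperedge it uses) is a common source of both sides.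
   A latent collider lies in Anc(Z): it is replaced by a detour to the first W-node z on a
   latent directed path towards Z, and z is then a collider in Anc(Z). For sigma-separation,
   a conditioned node whose edge stays inside its strongly connected component is routed to
   the first W-node of that component, so that the marginal edge stays inside it as well.
   Conditional independence transfers because a version of the conditional probability that
   is measurable in the coordinates of C factors through the projection onto X_W. *)

Set Implicit Arguments.
Unset Strict Implicit.
Unset Printing Implicit Defensive.

Lemma AncSP (T : finType) (e : rel T) (Z : {set T}) (w : T) :
  reflect (exists2 z, z \in Z & connect e w z) (w \in AncS e Z).
Proof. by apply: (iffP bigcupP) => -[z zZ wz]; exists z; rewrite // inE in wz *. Qed.

Lemma in_Sc (T : finType) (e : rel T) (v w : T) :
  (w \in Sc e v) = connect e w v && connect e v w.
Proof. by rewrite !inE. Qed.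

Lemma mem_val_imset (V : finType) (W : {set V}) (A : {set subW W}) (w : subW W) :
  (val w \in val @: A) = (w \in A).
Proof. exact: mem_imset. Qed.

(** * Open walks *)

Section OpenWalk.
Variables (T : finType) (e : rel T) (Hs : {set {set T}}) (Z : {set T}).
Variable sigma : bool.

Definition sc_exit (d : bool) (a b : T) : bool := d && (b \notin Sc e a).

(* [w] does not block a walk passing through it. [ain]/[aout]: the incoming/outgoing edge
   has an arrowhead at [w]; [lin]/[lout]: that edge points from [w] to a node outside
   [Sc w]. *)
Definition open_at (w : T) (ain lin aout lout : bool) : bool :=
  if ain && aout then w \in AncS e Z
  else (w \notin Z) || [&& sigma, ~~ lin & ~~ lout].

Lemma open_at_lout_mono (w : T) (ain lin aout lout lout' : bool) :
  (lout' -> lout) -> open_at w ain lin aout lout -> open_at w ain lin aout lout'.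
Proof.
move=> lout'l; rewrite /open_at; case: (ain && aout) (w \notin Z) => [|[]] //=.
by move=> /and3P[-> -> nl]; apply: contra nl.
Qed.

Lemma open_at_notin (w : T) (ain lin aout lout : bool) :
  w \notin Z -> ~~ (ain && aout) -> open_at w ain lin aout lout.
Proof. by move=> wZ nc; rewrite /open_at (negbTE nc) wZ. Qed.

(* The last node of the walk must avoid [Z], while the first one is only checked by
   [open_at]; hence the extra [x0 \notin Z] in [open_walk_iff]. *)
Fixpoint open_walk (x : T) (ain lin : bool) (st : seq (ekind * T)) : bool :=
  if st is (k, y) :: st' then
    [&& edge_ok e Hs k x y,
        open_at x ain lin (head_at_prev k) (sc_exit (is_fwd k) x y) &
        open_walk y (head_at_next k) (sc_exit (is_bwd k) y x) st']
  else x \notin Z.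

Definition blocked (x0 : T) (st : seq (ekind * T)) : Prop :=
  if sigma then sigma_blocked e Z x0 st else d_blocked e Z x0 st.

Definition ain_at (ain : bool) (st : seq (ekind * T)) (i : nat) : bool :=
  if i is j.+1 then head_at_next (pkind st j) else ain.

Definition lin_at (x : T) (lin : bool) (st : seq (ekind * T)) (i : nat) : bool :=
  if i is j.+1 then sc_exit (is_bwd (pkind st j)) (pnode x st i) (pnode x st j)
  else lin.

Definition open_step (x : T) (ain lin : bool) (st : seq (ekind * T)) (i : nat) :=
  edge_ok e Hs (pkind st i) (pnode x st i) (pnode x st i.+1) &&
  open_at (pnode x st i) (ain_at ain st i) (lin_at x lin st i)
    (head_at_prev (pkind st i)) (sc_exit (is_fwd (pkind st i)) (pnode x st i) (pnode x st i.+1)).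

Lemma pnode_cons (x y : T) (k : ekind) (st : seq (ekind * T)) (i : nat) :
  (i <= size st)%N -> pnode x ((k, y) :: st) i.+1 = pnode y st i.
Proof. by move=> le_i; apply: set_nth_default; rewrite /= size_map ltnS. Qed.

Lemma pnode_last (x : T) (st : seq (ekind * T)) :
  pnode x st (size st) = last x (map snd st).
Proof. by rewrite /pnode -(size_map snd) nth_last. Qed.

Lemma open_step_cons (x y : T) (k : ekind) (ain lin : bool) (st : seq (ekind * T)) (i : nat) :
  (i < size st)%N ->
  open_step x ain lin ((k, y) :: st) i.+1 =
  open_step y (head_at_next k) (sc_exit (is_bwd k) y x) st i.
Proof.
move=> lt_i; rewrite /open_step /ain_at /lin_at !pnode_cons ?(ltnW lt_i) //.
by case: i lt_i => [|i] lt_i //=; rewrite pnode_cons // ltnW // ltnW.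
Qed.

Lemma open_walkP (x : T) (ain lin : bool) (st : seq (ekind * T)) :
  open_walk x ain lin st <->
  (forall i, (i < size st)%N -> open_step x ain lin st i) /\
  pnode x st (size st) \notin Z.
Proof.
elim: st x ain lin => [|[k y] st IH] x ain lin /=; first by split=> [|[]].
rewrite pnode_cons //; split.
  move=> /and3P[ek ox /IH[steps endZ]]; split=> // -[|i] lt_i; first by rewrite /open_step /= ek.
  by rewrite open_step_cons //; apply: steps.
move=> [steps endZ]; have /andP[ek ox] := steps 0 isT.
rewrite ek ox; apply/IH; split=> // i lt_i.
by rewrite -(open_step_cons x y k ain lin) //; apply: steps.
Qed.

Definition open_inner (x0 : T) (st : seq (ekind * T)) (i : nat) : bool :=
  if collider st i then pnode x0 st i \in AncS e Z
  else (pnode x0 st i \notin Z) ||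
       [&& sigma, ~~ sc_exit (is_bwd (pkind st i.-1)) (pnode x0 st i) (pnode x0 st i.-1)
        & ~~ sc_exit (is_fwd (pkind st i)) (pnode x0 st i) (pnode x0 st i.+1)].

Lemma open_step_inner (x0 : T) (ain lin : bool) (st : seq (ekind * T)) (i : nat) :
  intermediate st i ->
  open_step x0 ain lin st i =
  edge_ok e Hs (pkind st i) (pnode x0 st i) (pnode x0 st i.+1) && open_inner x0 st i.
Proof. by case: i. Qed.

Lemma blockedP (x0 : T) (st : seq (ekind * T)) :
  blocked x0 st <-> [\/ x0 \in Z, pnode x0 st (size st) \in Z |
                        exists2 i, intermediate st i & ~~ open_inner x0 st i].
Proof.
rewrite /blocked /open_inner; split.
  case: sigma => [[?|[?|[[i [ii [c nA]]]|[i [ii [nc [iZ ex]]]]]]]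
                 |[?|[?|[[i [ii [c nA]]]|[i [ii [nc iZ]]]]]]];
    do ?[by constructor 1|by constructor 2]; constructor 3; exists i => //;
    rewrite ?c ?(negbTE nc) ?iZ //= negb_and !negbK.
  by rewrite /sc_exit; case: ex => ->; rewrite ?orbT.
case=> [x0Z|eZ|[i ii]]; first (by case: sigma; left); first by case: sigma; right; left.
case: ifP => [c nA|nc]; first by case: sigma; right; right; left; exists i.
rewrite negb_or negbK => /andP[iZ].
case: sigma => /= ex; right; right; right; exists i; rewrite nc; split=> //.
by rewrite negb_and !negbK in ex; do 2 split => //; case/orP: ex; [left|right].
Qed.

Lemma open_walk_iff (x0 : T) (st : seq (ekind * T)) :
  (x0 \notin Z) && open_walk x0 false false st <-> is_path e Hs x0 st /\ ~ blocked x0 st.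
Proof.
rewrite blockedP; split.
  move=> /andP[x0Z /open_walkP[steps endZ]]; split.
    by move=> i lt_i; case/andP: (steps i lt_i).
  case=> [|| [i ii]]; rewrite ?(negbTE x0Z) ?(negbTE endZ) //.
  by case/andP: (ii) => _ /steps; rewrite open_step_inner // => /andP[_ ->].
move=> [pth unblk].
have x0Z : x0 \notin Z by apply/negP => ?; apply: unblk; constructor 1.
rewrite x0Z; apply/open_walkP; split; last by apply/negP => ?; apply: unblk; constructor 2.
case=> [|i] lt_i; first by rewrite /open_step pth //= /open_at /= x0Z.
have ii : intermediate st i.+1 by [].
rewrite open_step_inner // pth //=; apply/negPn/negP => nopen.
by apply: unblk; constructor 3; exists i.+1.
Qed.

End OpenWalk.

(** * Separation in the marginal HEDG *)

Section Marginal.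
Variables (V : finType) (E : rel V) (H : {set {set V}}) (W : {set V}).
Hypothesis H_singleton : forall v : V, [set v] \in H.
Variables (C : {set subW W}) (sigma : bool).

Local Notation T := (subW W).
Local Notation EW := (margE E W).
Local Notation HW := (margH E H W).

Definition latent_path (a b : V) : Prop :=
  exists us : seq V, path E a (rcons us b) /\ all (fun u => u \notin W) us.

Lemma margEP (a b : T) : EW a b <-> latent_path (val a) (val b).
Proof. by split=> /asboolP. Qed.

Lemma latent_path_edge (a b : V) : E a b -> latent_path a b.
Proof. by exists [::]; rewrite /= andbT. Qed.

Lemma latent_path_trans (a b c : V) :
  latent_path a b -> b \notin W -> latent_path b c -> latent_path a c.
Proof.
move=> [us1 [p1 U1]] bW [us2 [p2 U2]]; exists (us1 ++ b :: us2); split.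
  by rewrite -cat_rcons rcons_cat cat_path last_rcons p1.
by rewrite all_cat U1 /= bW U2.
Qed.

Lemma latent_path_connect (a b : V) : latent_path a b -> connect E a b.
Proof. by move=> [us [p _]]; apply/connectP; exists (rcons us b); rewrite ?last_rcons. Qed.

Lemma connect_marg_path (b : T) (p : seq V) (a : T) (c : V) :
  c = val a \/ c \notin W /\ latent_path (val a) c ->
  path E c p -> last c p = val b -> connect EW a b.
Proof.
elim: p a c => [|x p IH] a c ac /=.
  move=> _ cb; case: ac => [ca|[cW _]]; last by rewrite cb (valP b) in cW.
  by rewrite (val_inj (etrans (esym ca) cb)).
move=> /andP[cx px] lastb.
have ax : latent_path (val a) x.
  case: ac => [<-|[cW ac]]; first exact: latent_path_edge.
  exact: latent_path_trans ac cW (latent_path_edge cx).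
case xW : (x \in W); last by apply: (IH a x) => //; right; rewrite xW.
apply: connect_trans (connect1 (_ : EW a (exist _ x xW))) _; first exact/margEP.
by apply: (IH _ x) => //; left.
Qed.

Lemma connect_marg (a b : T) : connect E (val a) (val b) -> connect EW a b.
Proof. by move=> /connectP[p pth lastb]; apply: connect_marg_path pth (esym lastb); left. Qed.

Lemma first_in_W (u w : V) : u \notin W -> connect E u w -> w \in W ->
  exists2 z : T, latent_path u (val z) & connect E (val z) w.
Proof.
move=> + /connectP[p pth ->]; elim: p u pth => [|x p IH] u /=; first by move=> _ /negbTE ->.
move=> /andP[ux px] uW lastW; case xW : (x \in W).
  by exists (exist _ x xW); [apply: latent_path_edge | apply/connectP; exists p].
have [z xz zw] := IH x px (negbT xW) lastW.
by exists z => //; apply: latent_path_trans (latent_path_edge ux) (negbT xW) xz.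
Qed.

Lemma Sc_marg (a b : T) : val b \in Sc E (val a) -> b \in Sc EW a.
Proof. by rewrite !in_Sc => /andP[ba ab]; rewrite !connect_marg. Qed.

Lemma AncS_marg (w : T) : val w \in AncS E (val @: C) -> w \in AncS EW C.
Proof.
by move=> /AncSP[_ /imsetP[z zC ->] wz]; apply/AncSP; exists z => //; apply: connect_marg.
Qed.

Definition latent_reach (F : {set V}) (v : V) : Prop :=
  v \in F \/ exists2 f, f \in F & f \notin W /\ latent_path f v.

Lemma latent_reach_step (F : {set V}) (u v : V) :
  latent_reach F u -> u \notin W -> latent_path u v -> latent_reach F v.
Proof.
move=> [uF|[f fF [fW fu]]] uW uv; right; first by exists u.
by exists f => //; split=> //; apply: latent_path_trans fu uW uv.
Qed.

Lemma margH_pair (F : {set V}) (a b : T) :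
  F \in H -> F \subset val @: [set a; b] :|: ~: W ->
  latent_reach F (val a) -> latent_reach F (val b) -> [set a; b] \in HW.
Proof.
move=> FH Fsub ra rb; rewrite inE; apply/asboolP; exists F; do 2 split=> //.
move=> v; rewrite !inE => /orP[]/eqP->; [move: ra | move: rb];
  by case=> [?|[f ? [? [us [? ?]]]]]; [left | right; exists f, us].
Qed.

Lemma sub_pair_l (F : {set V}) (a b : T) :
  F \subset [set val a] :|: ~: W -> F \subset val @: [set a; b] :|: ~: W.
Proof.
by move/fintype.subset_trans; apply; apply: finset.setSU; rewrite imsetU1; apply: finset.subsetUl.
Qed.

Lemma bi_edge_marg (F : {set V}) (a b : T) :
  F \in H -> a != b -> F \subset val @: [set a; b] :|: ~: W ->
  latent_reach F (val a) -> latent_reach F (val b) -> edge_ok EW HW Bi a b.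
Proof. by move=> FH ab Fsub ra rb; rewrite /= ab; apply: margH_pair ra rb. Qed.

Lemma edge_marg (k : ekind) (a b : T) : edge_ok E H k (val a) (val b) -> edge_ok EW HW k a b.
Proof.
case: k => /=; try by move=> /latent_path_edge /margEP.
move=> /andP[ab abH]; apply: bi_edge_marg abH _ _ _ _ => //.
- by rewrite imsetU1 imset_set1; apply: finset.subsetUl.
- by left; rewrite !inE eqxx.
- by left; rewrite !inE eqxx orbT.
Qed.

Local Notation ZV := (val @: C).
Local Notation openG := (open_at E ZV sigma).
Local Notation openW := (open_at EW C sigma).
Local Notation walkW := (open_walk EW HW C sigma).

Definition dominates (w : T) (hG bG hW bW : bool) : Prop :=
  forall aout lout : bool, (aout -> ~~ lout) ->
    openG (val w) hG bG aout lout -> openW w hW bW aout lout.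

Definition accepts_head (w : T) (hW bW : bool) : Prop :=
  openW w hW bW true false /\ (hW -> ~~ bW).

Lemma dominates_same (w : T) (h bG bW : bool) :
  (w \in C -> bW -> bG) -> dominates w h bG h bW.
Proof.
move=> bWG aout lout _; rewrite /open_at mem_val_imset.
case: (h && aout); first exact: AncS_marg.
case: (w \in C) bWG => //= bWG /and3P[-> nbG ->]; rewrite andbT.
by apply: contra nbG; apply: bWG.
Qed.

Lemma dominates_merge (w : T) (hG hW bW : bool) :
  accepts_head w hW bW -> dominates w hG false hW bW.
Proof.
move=> [ow hWbW] [] lout; first by move=> /(_ isT) /negbTE -> _.
move: ow; rewrite /open_at mem_val_imset !andbF andbT /= => + _.
case: (w \in C) => //= ow /andP[-> ->]; rewrite andbT /=.
by case: hW hWbW ow => [nbW _ | _ /and3P[]] //; apply: nbW.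
Qed.

Lemma dominates_in_C (w : T) (hG bG : bool) : w \in C -> dominates w hG bG true false.
Proof.
move=> wC [] lout _; rewrite /open_at mem_val_imset wC /=; first by move=> _; apply/AncSP; exists w.
by rewrite !andbF; case: hG => //= /and3P[-> _ ->].
Qed.

Lemma accepts_head_AncS (w : T) : w \in AncS EW C -> accepts_head w true false.
Proof. by []. Qed.

Lemma sc_exit_marg (d : bool) (a b : T) : sc_exit EW d a b -> sc_exit E d (val a) (val b).
Proof. by case/andP=> -> ab; apply: contra ab; apply: Sc_marg. Qed.

Definition walkW_to (t : V) (w0 : T) (hW bW : bool) : Prop :=
  exists2 stW : seq (ekind * T), walkW w0 hW bW stW & val (last w0 (map snd stW)) = t.

Lemma walkW_to_cons (t : V) (w0 w : T) (k : ekind) (hW bW : bool) :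
  edge_ok EW HW k w0 w -> openW w0 hW bW (head_at_prev k) (sc_exit EW (is_fwd k) w0 w) ->
  walkW_to t w (head_at_next k) (sc_exit EW (is_bwd k) w w0) -> walkW_to t w0 hW bW.
Proof. by move=> ew ow [stW wk <-]; exists ((k, w) :: stW); rewrite //= ew ow. Qed.

Definition confounded (w0 : T) (u : V) : Prop :=
  exists2 F : {set V}, F \in H &
    [/\ F \subset [set val w0] :|: ~: W, latent_reach F (val w0) & latent_reach F u].

Lemma collider_exit (u : V) : u \notin W -> u \in AncS E ZV ->
  exists2 z : T, latent_path u (val z) & z \in AncS EW C.
Proof.
move=> uW /AncSP[_ /imsetP[c cC ->] uc]; have [z uz zc] := first_in_W uW uc (valP c).
by exists z => //; apply/AncSP; exists c => //; apply: connect_marg.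
Qed.

(* A G-walk at [u], in state [(hG, bG)] and ending at the W-node [t], is being contracted
   into a G_W-walk at [w0] in state [(hW, bW)]: either [u = val w0] ([sim_W]), or [u] is
   latent and the stretch from [w0] to [u] is becoming an edge [w0 -> _] ([sim_fwd]),
   [w0 <- _] ([sim_bwd]) or [w0 <-> _] ([sim_bi]). Each invariant states that the
   contraction can be completed to an open G_W-walk ending at [t]. *)
Section Simulation.
Variable t : V.

Definition sim_W (u : V) (hG bG : bool) : Prop :=
  forall (w0 : T) (hW bW : bool), val w0 = u ->
    dominates w0 hG bG hW bW -> (hW -> ~~ bW) -> walkW_to t w0 hW bW.

Definition sim_fwd (u : V) (hG : bool) : Prop :=
  forall (w0 : T) (hW bW : bool), u \notin W ->
    latent_path (val w0) u -> w0 \notin C -> hG -> walkW_to t w0 hW bW.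

Definition sim_bwd (u : V) : Prop :=
  forall (w0 : T) (hW bW : bool), u \notin W ->
    latent_path u (val w0) -> accepts_head w0 hW bW -> walkW_to t w0 hW bW.

Definition sim_bi (u : V) (hG : bool) : Prop :=
  forall (w0 : T) (hW bW : bool), u \notin W ->
    confounded w0 u -> hG -> accepts_head w0 hW bW -> walkW_to t w0 hW bW.

Definition simulates (u : V) (hG bG : bool) : Prop :=
  [/\ sim_W u hG bG, sim_fwd u hG, sim_bwd u & sim_bi u hG].

Lemma close_bi (F : {set V}) (w0 y : T) (hG hW bW : bool) :
  F \in H -> F \subset val @: [set w0; y] :|: ~: W ->
  latent_reach F (val w0) -> latent_reach F (val y) -> accepts_head w0 hW bW ->
  dominates y hG false true false -> sim_W (val y) hG false -> walkW_to t w0 hW bW.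
Proof.
move=> FH Fsub rw0 ry [ow0 hWbW] domy simy.
have [yw0|ne] := eqVneq y w0.
  by rewrite yw0 in simy; apply: simy => //; apply: dominates_merge.
apply: (walkW_to_cons (k := Bi) (w := y)) => //; last exact: simy.
by apply: (bi_edge_marg FH) => //; rewrite eq_sym.
Qed.

(* If [y] is in [C] and [u] in [Sc y], the G-walk is sigma-open at [y] but the marginal
   edge [y -> w0] may leave [Sc y]; the first W-node [z] on a latent path from [u] to [y]
   lies in [Sc y] and is used instead. *)
Lemma sim_bwd_parent (u : V) (y : T) :
  E (val y) u -> sim_W (val y) false (u \notin Sc E (val y)) -> sim_bwd u.
Proof.
move=> yu simy w0 hW bW uW uw0 [ow0 hWbW].
have yw0 : EW y w0 by apply/margEP; apply: latent_path_trans (latent_path_edge yu) uW uw0.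
have [/andP[yC uSc]|no_fix] := boolP ((y \in C) && (u \in Sc E (val y))); last first.
  apply: (walkW_to_cons (k := Bwd) (w := y)) => //; apply: simy => //.
  by apply: dominates_same => yC _ /=; apply: contraL no_fix => ->; rewrite yC.
rewrite uSc in simy.
have uy : connect E u (val y) by move: uSc; rewrite in_Sc => /andP[].
have [z uz zy] := first_in_W uW uy (valP y).
have zSc : z \in Sc EW y.
  by apply: Sc_marg; rewrite in_Sc zy (connect_trans (connect1 yu) (latent_path_connect uz)).
have reach_y : walkW_to t y false false.
  by apply: simy => //; apply: dominates_same.
have [zy'|nezy] := eqVneq z y.
  rewrite zy' in uz; apply: (@close_bi [set u] w0 y false) => //.
  - by rewrite finset.sub1set !inE uW orbT.
  - by right; exists u; rewrite ?inE.
  - by right; exists u; rewrite ?inE.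
  - exact: dominates_in_C.
have [zw0|nezw0] := eqVneq z w0.
  by apply: (walkW_to_cons (k := Bwd) (w := y)); rewrite //= /sc_exit -zw0 zSc.
apply: (walkW_to_cons (k := Bi) (w := z)) => //.
  apply: (@bi_edge_marg [set u]) => //; first by rewrite eq_sym.
  - by rewrite finset.sub1set !inE uW orbT.
  - by right; exists u; rewrite ?inE.
  - by right; exists u; rewrite ?inE.
apply: (walkW_to_cons (k := Bwd) (w := y)); rewrite /= /sc_exit ?zSc //.
- by apply/margEP; apply: latent_path_trans (latent_path_edge yu) uW uz.
- by apply/AncSP; exists y => //; apply: connect_marg.
Qed.

(* Here [w0] in [C] is sigma-open only because [y] is in [Sc w0]; the walk is routed to the
   first W-node [z] on a latent path from [y] back to [w0], and [y] becomes a latent common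
   source of [z] and the rest of the walk. *)
Lemma sim_W_fwd_C (w0 : T) (y : V) (hG bG hW bW : bool) :
  E (val w0) y -> y \notin W -> w0 \in C ->
  openG (val w0) hG bG false (y \notin Sc E (val w0)) ->
  dominates w0 hG bG hW bW -> sim_bi y true -> walkW_to t w0 hW bW.
Proof.
move=> w0y yW w0C; rewrite /open_at andbF mem_val_imset w0C /= => /and3P[sg nbG /negPn ySc].
move=> dom simy; have yw0 : connect E y (val w0) by move: ySc; rewrite in_Sc => /andP[].
have [z yz zw0] := first_in_W yW yw0 (valP w0).
have zSc : z \in Sc EW w0.
  by apply: Sc_marg; rewrite in_Sc zw0 (connect_trans (connect1 w0y) (latent_path_connect yz)).
apply: (walkW_to_cons (k := Fwd) (w := z)).
- by apply/margEP; apply: latent_path_trans (latent_path_edge w0y) yW yz.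
- rewrite /= /sc_exit zSc; apply: dom => //.
  by rewrite /open_at andbF mem_val_imset w0C /= sg nbG.
apply: simy => //.
  exists [set y]; first exact: H_singleton.
  split; [by rewrite finset.sub1set !inE yW orbT | by right; exists y; rewrite ?inE |].
  by left; rewrite inE.
by apply: accepts_head_AncS; apply/AncSP; exists w0 => //; apply: connect_marg.
Qed.

Section Step.
Variables (u y : V) (k : ekind) (hG bG : bool).
Hypothesis uy : edge_ok E H k u y.
Hypothesis IH : simulates y (head_at_next k) (sc_exit E (is_bwd k) y u).
Hypothesis ou : openG u hG bG (head_at_prev k) (sc_exit E (is_fwd k) u y).

Lemma sim_bwd_cons : sim_bwd u.
Proof.
move=> w0 hW bW uW uw0 acc; case: IH => IHW _ IHbwd IHbi.
have [yW|yW] := boolP (y \in W); last first.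
  case: k uy IHbwd IHbi => /= [uy' | yu | /andP[_ uyH]] IHbwd IHbi.
  - apply: IHbi => //; exists [set u]; first exact: H_singleton.
    split; [by rewrite finset.sub1set !inE uW orbT | by right; exists u; rewrite ?inE |].
    by right; exists u; rewrite ?inE //; split=> //; apply: latent_path_edge.
  - by apply: IHbwd => //; apply: latent_path_trans (latent_path_edge yu) uW uw0.
  - apply: IHbi => //; exists [set u; y] => //.
    split; [| by right; exists u; rewrite ?inE ?eqxx | by left; rewrite !inE eqxx orbT].
    by rewrite finset.subUset !finset.sub1set !inE uW yW !orbT.
pose y' : T := exist _ y yW.
case: k uy IHW => /= [uy' | yu | /andP[_ uyH]] IHW; last first.
- apply: (@close_bi [set u; y] w0 y' true) => //; last exact: dominates_same.
  + rewrite finset.subUset !finset.sub1set !inE uW orbT /=; apply/orP; left.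
    by apply/imsetP; exists y'; rewrite // !inE eqxx orbT.
  + by right; exists u; rewrite ?inE ?eqxx.
  + by left; rewrite !inE eqxx orbT.
- exact: (@sim_bwd_parent u y') yu IHW w0 hW bW uW uw0 acc.
apply: (@close_bi [set u] w0 y' true) => //; last exact: dominates_same.
- by rewrite finset.sub1set !inE uW orbT.
- by right; exists u; rewrite ?inE.
- by right; exists u; rewrite ?inE //; split=> //; apply: latent_path_edge.
Qed.

Lemma sim_W_cons : sim_W u hG bG.
Proof.
move=> w0 hW bW uw0 dom hWbW; case: IH => IHW IHfwd IHbwd IHbi; subst u.
have [yW|yW] := boolP (y \in W).
  pose y' : T := exist _ y yW.
  apply: (walkW_to_cons (@edge_marg k w0 y' uy)).
    apply: dom; first by case: (k).
    by apply: open_at_lout_mono ou; apply: sc_exit_marg.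
  apply: IHW => //; last by case: (k).
  by apply: dominates_same => _; apply: sc_exit_marg.
case: k uy ou IHfwd IHbwd IHbi => /= [w0y | yw0 | /andP[_ w0yH]] ow0 IHfwd IHbwd IHbi.
- have [w0C|w0C] := boolP (w0 \in C); first exact: sim_W_fwd_C w0y yW w0C ow0 dom IHbi.
  by apply: IHfwd => //; apply: latent_path_edge.
- by apply: IHbwd => //; [apply: latent_path_edge | split=> //; apply: dom].
- apply: IHbi => //; last by split=> //; apply: dom.
  exists [set val w0; y] => //.
  split; [| by left; rewrite !inE eqxx | by left; rewrite !inE eqxx orbT].
  by rewrite finset.subUset !finset.sub1set !inE eqxx yW orbT.
Qed.

Lemma sim_fwd_cons : sim_fwd u hG.
Proof.
move=> w0 hW bW uW w0u w0C hGu; case: IH => IHW IHfwd _ _.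
have ow0 lout : openW w0 hW bW false lout by apply: open_at_notin; rewrite ?andbF.
case hp : (head_at_prev k).
  move: ou; rewrite /open_at hGu hp /= => uA; have [z uz zA] := collider_exit uW uA.
  apply: (walkW_to_cons (k := Fwd) (w := z)) => //.
    by apply/margEP; apply: latent_path_trans w0u uW uz.
  exact: sim_bwd_cons uW uz (accepts_head_AncS zA).
case: k hp uy IHW IHfwd => //= _ uy' IHW IHfwd.
have w0y := latent_path_trans w0u uW (latent_path_edge uy').
have [yW|yW] := boolP (y \in W); last exact: IHfwd.
apply: (walkW_to_cons (k := Fwd) (w := exist _ y yW)) => //; first exact/margEP.
by apply: IHW => //; apply: dominates_same.
Qed.

Lemma sim_bi_cons : sim_bi u hG.
Proof.
move=> w0 hW bW uW [F FH [Fsub rw0 ru]] hGu acc; case: IH => IHW _ _ IHbi.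
case hp : (head_at_prev k).
  move: ou; rewrite /open_at hGu hp /= => uA; have [z uz zA] := collider_exit uW uA.
  have [zw0|nezw0] := eqVneq z w0; first by rewrite zw0 in uz; apply: sim_bwd_cons.
  apply: (walkW_to_cons (k := Bi) (w := z)); last exact: sim_bwd_cons uW uz (accepts_head_AncS zA).
    apply: (bi_edge_marg FH); rewrite 1?eq_sym ?sub_pair_l //.
    exact: latent_reach_step ru uW uz.
  exact: acc.1.
case: k hp uy IHW IHbi => //= _ uy' IHW IHbi.
have ry := latent_reach_step ru uW (latent_path_edge uy').
have [yW|yW] := boolP (y \in W); last by apply: IHbi => //; exists F.
apply: (@close_bi F w0 (exist _ y yW) true) => //; first exact: sub_pair_l.
exact: dominates_same.
Qed.

End Step.

Hypothesis tW : t \in W.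

Lemma simulate (st : seq (ekind * V)) (u : V) (hG bG : bool) :
  open_walk E H ZV sigma u hG bG st -> last u (map snd st) = t -> simulates u hG bG.
Proof.
elim: st u hG bG => [|[k y] st IHst] u hG bG /=.
  move=> uZ ut; split=> w0 hW bW; last 3 first; try by rewrite ut tW.
  by move=> w0u _ _; exists [::]; rewrite /= -?mem_val_imset w0u.
move=> /and3P[uy ou wy] yt; have IH := IHst y _ _ wy yt.
by split; [exact: sim_W_cons uy IH ou | exact: sim_fwd_cons uy IH ou
          | exact: sim_bwd_cons uy IH | exact: sim_bi_cons uy IH ou].
Qed.

End Simulation.

Lemma blocked_marg (A B : {set T}) :
  (forall x0 st, path_between EW HW A B x0 st -> blocked EW C sigma x0 st) ->
  forall x0 st, path_between E H (val @: A) (val @: B) x0 st -> blocked E ZV sigma x0 st.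
Proof.
move=> sepW x0 st [pth [x0A endB]]; apply: contrapT => unblk.
have /andP[x0Z wk] := (open_walk_iff E H ZV sigma x0 st).2 (conj pth unblk).
case/imsetP: x0A => a aA x0a; subst x0.
move: endB; rewrite pnode_last => /imsetP[b bB lastb].
have [simW _ _ _] := simulate (valP b) wk lastb.
have [stW wkW lastW] : walkW_to (val b) a false false by apply: simW => //; apply: dominates_same.
have /(open_walk_iff EW HW C sigma a stW)[pthW] : (a \notin C) && walkW a false false stW.
  by rewrite -mem_val_imset x0Z.
by apply; apply: sepW; rewrite /path_between pnode_last (val_inj lastW).
Qed.
End Marginal.

Lemma dsep_marg (V : finType) (E : rel V) (H : {set {set V}}) (W : {set V})
    (A B C : {set subW W}) : (forall v : V, [set v] \in H) ->
  dsep (margE E W) (margH E H W) A B C -> dsep E H (val @: A) (val @: B) (val @: C).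
Proof. by move=> H1; apply: (@blocked_marg _ _ _ _ H1 C false). Qed.

Lemma sigmasep_marg (V : finType) (E : rel V) (H : {set {set V}}) (W : {set V})
    (A B C : {set subW W}) : (forall v : V, [set v] \in H) ->
  sigmasep (margE E W) (margH E H W) A B C -> sigmasep E H (val @: A) (val @: B) (val @: C).
Proof. by move=> H1; apply: (@blocked_marg _ _ _ _ H1 C true). Qed.

(** * Conditional independence in the marginal distribution *)

Local Open Scope classical_set_scope.

Lemma preimage_generated (T1 T2 : Type) (S1 : set (set T1)) (G2 : set (set T2)) (f : T1 -> T2) :
  sigma_algebra setT S1 -> (forall g, G2 g -> S1 (f @^-1` g)) ->
  forall g, <<s G2 >> g -> S1 (f @^-1` g).
Proof.
move=> S1sigma G2S1 g G2g; rewrite -[f @^-1` g]setTI.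
apply: (smallest_sub (sigma_algebra_image f S1sigma)) G2g => {}g /G2S1.
by rewrite /image_set_system /= setTI.
Qed.

Section Coordinates.
Context (V : Type) (dX : V -> measure_display) (X : forall v : V, measurableType (dX v)).
Local Notation sigmaX := (@sigma_coord V dX X).

Lemma sigma_coord_mono (S1 S2 : set V) (g : set (dprod X)) :
  S1 `<=` S2 -> sigmaX S1 g -> sigmaX S2 g.
Proof.
move=> S12; apply: sub_sigma_algebra2 => _ [v [B [S1v [mB ->]]]].
by exists v, B; split=> //; apply: S12.
Qed.

Lemma sigma_coord_local (S : set V) (g : set (dprod X)) (x x' : dprod X) :
  sigmaX S g -> (forall v, S v -> x v = x' v) -> g x -> g x'.
Proof.
pose local := [set g : set (dprod X) | forall x x' : dprod X,
  (forall v, S v -> x v = x' v) -> g x -> g x'].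
have local_sigma : sigma_algebra setT local.
  split=> /= [x0 x1 _ []|A Aloc x0 x1 x01 [_ nAx]|F Floc x0 x1 x01 [i _ Fix]].
  - by split=> // Ax'; apply: nAx; apply: Aloc Ax' => v /x01.
  - by exists i => //; apply: Floc Fix.
have cylinders_local : @cylinders V dX X S `<=` local.
  by move=> _ [v [B [Sv [_ ->]]]] x0 x1 x01 /=; rewrite -x01.
by move=> Sg; apply: (smallest_sub local_sigma cylinders_local Sg).
Qed.

End Coordinates.

Section MarginalDistribution.
Context (V : finType) (dX : V -> measure_display) (X : forall v : V, measurableType (dX v)).
Context (W : {set V}).
Local Notation XW := (restrX X W).
Local Notation sigmaV := (@sigma_coord V dX X).
Local Notation sigmaW := (@sigma_coord (subW W) (fun w => dX (val w)) XW).
Local Notation proj := (proj_to X W).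

Lemma sigma_coord_proj (S : set V) (SW : set (subW W)) (F : set (dprod XW)) :
  sigmaW SW F -> (forall w, SW w -> S (val w)) -> sigmaV S (proj @^-1` F).
Proof.
move=> + SWS; apply: preimage_generated; first exact: smallest_sigma_algebra.
move=> _ [w [B [SWw [mB ->]]]].
by apply: sub_sigma_algebra; exists (val w), B; split=> //; apply: SWS.
Qed.

Lemma measurable_proj : measurable_fun setT proj.
Proof. by move=> _ F mF; rewrite setTI; apply: (@sigma_coord_proj setT setT). Qed.

Definition extend_by_point (y : dprod XW) : dprod X := fun v =>
  if pselect (v \in W) is left vW then y (exist _ v vW) else point.

Lemma extend_by_point_val (y : dprod XW) (w : subW W) : extend_by_point y (val w) = y w.
Proof.
case: w => v vW; rewrite /extend_by_point /=; case: pselect => [vW'|] //.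
by rewrite (bool_irrelevance vW' vW).
Qed.

Lemma sigma_coord_extend (S : set V) (SW : set (subW W)) (G : set (dprod X)) :
  sigmaV S G -> (forall v, S v -> exists2 w, SW w & v = val w) ->
  sigmaW SW (extend_by_point @^-1` G).
Proof.
move=> + SSW; apply: preimage_generated; first exact: smallest_sigma_algebra.
move=> _ [v [B [/SSW[w SWw vw] [mB ->]]]]; subst v.
apply: sub_sigma_algebra; exists w, B; do 2 split=> //.
by apply/seteqP; split=> y /=; rewrite extend_by_point_val.
Qed.

Section Kernel.
Context (R : realType) (P : probability (dprod X) R) (PW : probability (dprod XW) R).
Hypothesis PW_marg : forall B : set (dprod XW), measurable B -> PW B = P (proj @^-1` B).

Lemma integral_marg (D : set (dprod XW)) (g : dprod XW -> \bar R) :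
  measurable D -> measurable_fun D g -> (forall y, D y -> (0 <= g y)%E) ->
  (\int[PW]_(y in D) g y = \int[P]_(x in proj @^-1` D) g (proj x))%E.
Proof.
move=> mD mg g0; rewrite -(ge0_integral_pushforward measurable_proj) //; last first.
  by move=> y; rewrite inE => /g0.
apply: eq_measure_integral; first exact: measurable_proj.
by move=> mp B mB _; apply: etrans (PW_marg mB) _.
Qed.

Lemma cond_indep_marg (A B C : {set subW W}) :
  cond_indep P (val @: A) (val @: B) (val @: C) -> cond_indep PW A B C.
Proof.
move=> indepV F FA.
have /indepV[k [k01 [kC kint]]] : sigmaV [set v | v \in val @: A] (proj @^-1` F).
  by apply: (sigma_coord_proj FA) => w wA; rewrite /= mem_val_imset.
pose kW := k \o extend_by_point.
have kW_proj x : kW (proj x) = k x.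
  apply: (sigma_coord_local (x := x) (kC _ (measurable_set1 (k x)))) => //=.
  by move=> _ /imsetP[w _ ->]; rewrite extend_by_point_val.
have kWC O : measurable O -> sigmaW [set w | w \in C] (kW @^-1` O).
  by move=> mO; apply: (sigma_coord_extend (kC O mO)) => _ /imsetP[w wC ->]; exists w.
exists kW; split; first by move=> y; apply: k01.
split; first by move=> O /kWC.
move=> D DBC; have mD : measurable D := sigma_coord_mono (@subsetT _ _) DBC.
have mF : measurable F := sigma_coord_mono (@subsetT _ _) FA.
rewrite PW_marg; last exact: measurableI.
rewrite preimage_setI kint; last first.
  by apply: (sigma_coord_proj DBC) => w /=; rewrite !inE !mem_val_imset.
rewrite integral_marg //.
- by apply: eq_integral => x _; rewrite /= kW_proj.
- apply/measurable_EFinP => _ O mO; apply: measurableI => //.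
  exact: sigma_coord_mono (@subsetT _ _) (kWC O mO).
- by move=> y _; rewrite lee_fin; case/andP: (k01 (extend_by_point y)).
Qed.

End Kernel.
End MarginalDistribution.

Unset Implicit Arguments.

Theorem mainTheorem19 (R : realType) (V : finType) (E : rel V)
  (H : {set {set V}}) (dX : V -> measure_display)
  (X : forall v : V, measurableType (dX v))
  (P : probability (dprod X) R) (W : {set V})
  (PW : probability (dprod (restrX X W)) R) :
  is_hedg H ->
  (forall v : V, standard_borel R (X v)) ->
  (* PW is the marginal of P on X_W *)
  (forall B : set (dprod (restrX X W)), measurable B ->
     PW B = P (proj_to X W @^-1` B)) ->
  (directed_global_markov E H P ->
     directed_global_markov (margE E W) (margH E H W) PW) /\
  (general_directed_global_markov E H P ->
     general_directed_global_markov (margE E W) (margH E H W) PW).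
Proof.
move=> [H_singleton _] _ PW_marg.
split=> markov A B C sepW; apply: (cond_indep_marg PW_marg); apply: markov.
  exact: dsep_marg H_singleton sepW.
exact: sigmasep_marg H_singleton sepW.
Qed.
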